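(* In a Markov category $\mathcal C$, for all $p\colon A\to X$ and $f,g\colon X\to Y$: if $f$ and $g$ are $p$-dilationally equal, then $f$ and $g$ are $p$-almost surely equal. The converse implication holds for all such $p,f,g$ if and only if $\mathcal C$ is causal.
   Context: A Markov category is a symmetric monoidal category $(\mathcal C,\otimes,I)$ with commutative comonoids $\mathrm{copy}_X\colon X\to X\otimes X$, $\mathrm{del}_X\colon X\to I$ compatible with $\otimes$, with $I$ terminal. A dilation of $p\colon A\to X$ is a morphism $\pi\colon A\to X\otimes E$ with $(\mathrm{id}_X\otimes\mathrm{del}_E)\circ\pi=p$. For $p\colon A\to X$ and $f,g\colon X\to Y$: $f,g$ are $p$-dilationally equal if for every dilation $\pi\colon A\to X\otimes E$ of $p$, $(f\otimes\mathrm{id}_E)\circ\pi=(g\otimes\mathrm{id}_E)\circ\pi$; they are $p$-almost surely equal if $(\mathrm{id}_X\otimes f)\circ\mathrm{copy}_X\circ p=(\mathrm{id}_X\otimes g)\circ\mathrm{copy}_X\circ p$. $\mathcal C$ is causal if for all $f\colon A\to W$, $g\colon W\to X$, $h_1,h_2\colon X\to Y$ with $(\mathrm{id}_X\otimes h_1)\circ\mathrm{copy}_X\circ g\circ f=(\mathrm{id}_X\otimes h_2)\circ\mathrm{copy}_X\circ g\circ f$, also $\big(\mathrm{id}_W\otimes((\mathrm{id}_X\otimes h_1)\circ\mathrm{copy}_X\circ g)\big)\circ\mathrm{copy}_W\circ f=\big(\mathrm{id}_W\otimes((\mathrm{id}_X\otimes h_2)\circ\mathrm{copy}_X\circ g)\big)\circ\mathrm{copy}_W\circ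 f$. *)

(* Morphism equality is Leibniz equality. *)

Set Implicit Arguments.
Unset Strict Implicit.

Record MarkovCat := {
  Obj : Type;
  Hom : Obj -> Obj -> Type;
  comp : forall (A B C : Obj), Hom B C -> Hom A B -> Hom A C;
  id : forall (A : Obj), Hom A A;
  comp_assoc : forall A B C D (f : Hom A B) (g : Hom B C) (h : Hom C D),
      comp h (comp g f) = comp (comp h g) f;
  comp_id_l : forall A B (f : Hom A B), comp (id B) f = f;
  comp_id_r : forall A B (f : Hom A B), comp f (id A) = f;
  tens : Obj -> Obj -> Obj;
  tensm : forall (A B C D : Obj), Hom A B -> Hom C D -> Hom (tens A C) (tens B D);
  tensm_id : forall A B, tensm (id A) (id B) = id (tens A B);
  tensm_comp : forall A B C A' B' C' (f : Hom A B) (g : Hom B C)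
      (f' : Hom A' B') (g' : Hom B' C'),
      tensm (comp g f) (comp g' f') = comp (tensm g g') (tensm f f');
  unit : Obj;
  alpha : forall (A B C : Obj), Hom (tens (tens A B) C) (tens A (tens B C));
  alpha_inv : forall (A B C : Obj), Hom (tens A (tens B C)) (tens (tens A B) C);
  alpha_iso1 : forall A B C, comp (alpha_inv A B C) (alpha A B C) = id _;
  alpha_iso2 : forall A B C, comp (alpha A B C) (alpha_inv A B C) = id _;
  alpha_nat : forall A B C A' B' C' (f : Hom A A') (g : Hom B B') (h : Hom C C'),
      comp (alpha A' B' C') (tensm (tensm f g) h)
      = comp (tensm f (tensm g h)) (alpha A B C);
  lambda : forall (A : Obj), Hom (tens unit A) A;
  lambda_inv : forall (A : Obj), Hom A (tens unit A);
  lambda_iso1 : forall A, comp (lambda_inv A) (lambda A) = id _;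
  lambda_iso2 : forall A, comp (lambda A) (lambda_inv A) = id _;
  lambda_nat : forall A B (f : Hom A B),
      comp (lambda B) (tensm (id unit) f) = comp f (lambda A);
  rho : forall (A : Obj), Hom (tens A unit) A;
  rho_inv : forall (A : Obj), Hom A (tens A unit);
  rho_iso1 : forall A, comp (rho_inv A) (rho A) = id _;
  rho_iso2 : forall A, comp (rho A) (rho_inv A) = id _;
  rho_nat : forall A B (f : Hom A B),
      comp (rho B) (tensm f (id unit)) = comp f (rho A);
  pentagon : forall A B C D,
      comp (alpha A B (tens C D)) (alpha (tens A B) C D)
      = comp (tensm (id A) (alpha B C D))
             ( comp (alpha A (tens B C) D) (tensm (alpha A B C) (id D)));
  triangle : forall A B,
      comp (tensm (id A) (lambda B)) (alpha A unit B) = tensm (rho A) (id B);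
  sigma : forall (A B : Obj), Hom (tens A B) (tens B A);
  sigma_nat : forall A B A' B' (f : Hom A A') (g : Hom B B'),
      comp (sigma A' B') (tensm f g) = comp (tensm g f) (sigma A B);
  sigma_invol : forall A B, comp (sigma B A) (sigma A B) = id _;
  hexagon : forall A B C,
      comp (alpha B C A) ( comp (sigma A (tens B C)) (alpha A B C))
      = comp (tensm (id B) (sigma A C))
             ( comp (alpha B A C) (tensm (sigma A B) (id C)));
  copy : forall (X : Obj), Hom X (tens X X);
  del : forall (X : Obj), Hom X unit;
  copy_coassoc : forall X,
      comp (alpha X X X) ( comp (tensm (copy X) (id X)) (copy X))
      = comp (tensm (id X) (copy X)) (copy X);
  copy_counit_l : forall X,
      comp (lambda X) ( comp (tensm (del X) (id X)) (copy X)) = id X;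
  copy_counit_r : forall X,
      comp (rho X) ( comp (tensm (id X) (del X)) (copy X)) = id X;
  copy_comm : forall X, comp (sigma X X) (copy X) = copy X;
  copy_tens : forall X Y,
      copy (tens X Y)
      = comp (alpha_inv X Y (tens X Y))
          ( comp (tensm (id X)
                   ( comp (alpha Y X Y)
                      ( comp (tensm (sigma X Y) (id Y)) (alpha_inv X Y Y))))
             ( comp (alpha X X (tens Y Y)) (tensm (copy X) (copy Y))));
  del_tens : forall X Y,
      del (tens X Y) = comp (lambda unit) (tensm (del X) (del Y));
  copy_unit : copy unit = lambda_inv unit;
  del_unique : forall X (f : Hom X unit), f = del X
}.

Arguments comp {m A B C} _ _.
Arguments id {m} A.
Arguments tens {m} _ _.
Arguments tensm {m A B C D} _ _.
Arguments unit {m}.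
Arguments rho {m} A.
Arguments copy {m} X.
Arguments del {m} X.

Section Defs.
Variable C : MarkovCat.

Definition is_dilation {A X E : Obj C} (p : Hom A X) (pi : Hom A (tens X E)) : Prop :=
 comp (rho X) (comp (tensm (id X) (del E)) pi) = p.

Definition dil_eq {A X Y : Obj C} (p : Hom A X) (f g : Hom X Y) : Prop :=
  forall (E : Obj C) (pi : Hom A (tens X E)), is_dilation p pi ->
   comp (tensm f (id E)) pi = comp (tensm g (id E)) pi.

Definition as_eq {A X Y : Obj C} (p : Hom A X) (f g : Hom X Y) : Prop :=
 comp (tensm (id X) f) (comp (copy X) p) = comp (tensm (id X) g) (comp (copy X) p).

Definition causal : Prop :=
  forall (A W X Y : Obj C) (f : Hom A W) (g : Hom W X) (h1 h2 : Hom X Y),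
   comp (tensm (id X) h1) (comp (copy X) (comp g f))
      = comp (tensm (id X) h2) (comp (copy X) (comp g f)) ->
   comp (tensm (id W) (comp (tensm (id X) h1) (comp (copy X) g))) (comp (copy W) f)
      = comp (tensm (id W) (comp (tensm (id X) h2) (comp (copy X) g))) (comp (copy W) f).

End Defs.


(* Copying [p] is itself a dilation of [p], on which dilational equality
   becomes almost sure equality after a swap.  If almost sure equality implies
   dilational equality, apply this to [g ∘ f] and its dilation
   [(copy ⊗ id) ∘ (g ⊗ id) ∘ copy ∘ f], which keeps the intermediate value in
   [W]: composing it with [h ⊗ id] yields, up to a symmetry, each side of the
   causality axiom.  Conversely, under causality take [W := X ⊗ E], [f := π]
   and [g := marg1]; the hypothesis is then [p]-almost sure equality since
   [marg1 ∘ π = p], and since copying [X ⊗ E] and taking both marginals is the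
   identity, [(h ⊗ id) ∘ π] is a post-composite of the causality expression. *)

Local Notation "g ∘ f" := (comp g f) (at level 44, right associativity).
Local Notation "f ⊗ g" := (tensm f g) (at level 30).

Section MarkovCategory.

Variable C : MarkovCat.

Lemma precomp_eq {A B D X : Obj C} (a : Hom B D) (b : Hom A B) (c : Hom A D)
  (x : Hom X A) : a ∘ b = c -> a ∘ (b ∘ x) = c ∘ x.
Proof. intros H. rewrite comp_assoc, H. reflexivity. Qed.

Lemma precomp_eq2 {A B B' D X : Obj C} (a : Hom B D) (b : Hom A B)
  (c : Hom B' D) (d : Hom A B') (x : Hom X A) :
  a ∘ b = c ∘ d -> a ∘ (b ∘ x) = c ∘ (d ∘ x).
Proof. intros H. rewrite !comp_assoc, H. reflexivity. Qed.

Lemma precomp_eq3 {A B B' D X : Obj C} (a : Hom B D) (b : Hom B' B)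
  (c : Hom A B') (d : Hom A D) (x : Hom X A) :
  a ∘ (b ∘ c) = d -> a ∘ (b ∘ (c ∘ x)) = d ∘ x.
Proof. intros H. rewrite !comp_assoc, <- (comp_assoc c b a), H. reflexivity. Qed.

Lemma tensm_comp_l {A B D E : Obj C} (f : Hom A B) (g : Hom B D) :
  (g ∘ f) ⊗ id E = (g ⊗ id E) ∘ (f ⊗ id E).
Proof. rewrite <- tensm_comp, comp_id_l. reflexivity. Qed.

Lemma tensm_comp_r {A B D E : Obj C} (f : Hom A B) (g : Hom B D) :
  id E ⊗ (g ∘ f) = (id E ⊗ g) ∘ (id E ⊗ f).
Proof. rewrite <- tensm_comp, comp_id_l. reflexivity. Qed.

Lemma tensm_interchange {A B A' B' : Obj C} (f : Hom A B) (g : Hom A' B') :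
  (f ⊗ id B') ∘ (id A ⊗ g) = (id B ⊗ g) ∘ (f ⊗ id A').
Proof. rewrite <- !tensm_comp, !comp_id_l, !comp_id_r. reflexivity. Qed.

Lemma alpha_inv_nat {A B D A' B' D' : Obj C}
  (f : Hom A A') (g : Hom B B') (h : Hom D D') :
  alpha_inv A' B' D' ∘ (f ⊗ (g ⊗ h)) = ((f ⊗ g) ⊗ h) ∘ alpha_inv A B D.
Proof.
  rewrite <- (comp_id_r (alpha_inv A' B' D' ∘ (f ⊗ (g ⊗ h)))), <- (alpha_iso2 A B D).
  rewrite <- !comp_assoc, (precomp_eq2 _ _ _ _ _ (eq_sym (alpha_nat f g h))).
  rewrite !comp_assoc, alpha_iso1, comp_id_l. reflexivity.
Qed.

Lemma triangle_inv (A B : Obj C) :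
  (rho A ⊗ id B) ∘ alpha_inv A unit B = id A ⊗ lambda B.
Proof. rewrite <- triangle, <- comp_assoc, alpha_iso2, comp_id_r. reflexivity. Qed.

Lemma sigma_unit : sigma (m := C) unit unit = id (tens unit unit).
Proof.
  assert (Hlambda : lambda unit ∘ sigma unit unit
                    = lambda unit ∘ id (tens (m := C) unit unit)).
  { rewrite (del_unique (lambda unit ∘ sigma unit unit)),
      (del_unique (lambda unit ∘ id _)). reflexivity. }
  rewrite <- (comp_id_l (sigma unit unit)), <- (lambda_iso1 unit), <- comp_assoc,
    Hlambda, comp_assoc, lambda_iso1, comp_id_l. reflexivity.
Qed.

Lemma copy_counit_r_comp {A X : Obj C} (x : Hom A X) :
  rho X ∘ ((id X ⊗ del X) ∘ (copy X ∘ x)) = x.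
Proof. rewrite (precomp_eq3 _ _ _ _ _ (copy_counit_r X)), comp_id_l. reflexivity. Qed.

Definition marg1 (X E : Obj C) : Hom (tens X E) X := rho X ∘ (id X ⊗ del E).
Definition marg2 (X E : Obj C) : Hom (tens X E) E := lambda E ∘ (del X ⊗ id E).

Lemma is_dilationE {A X E : Obj C} (p : Hom A X) (pi : Hom A (tens X E)) :
  is_dilation p pi <-> marg1 X E ∘ pi = p.
Proof. unfold is_dilation, marg1. rewrite comp_assoc. tauto. Qed.

Lemma copy_is_dilation {A X : Obj C} (p : Hom A X) : is_dilation p (copy X ∘ p).
Proof. apply copy_counit_r_comp. Qed.

Lemma marg2_graph {X Y : Obj C} (h : Hom X Y) :
  marg2 X Y ∘ ((id X ⊗ h) ∘ copy X) = h.
Proof.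
  unfold marg2. rewrite <- comp_assoc.
  rewrite (precomp_eq2 _ _ _ _ _ (tensm_interchange (del X) h)).
  rewrite (precomp_eq2 _ _ _ _ _ (lambda_nat h)), copy_counit_l, comp_id_r.
  reflexivity.
Qed.

Lemma marg_copy (X E : Obj C) :
  (marg1 X E ⊗ marg2 X E) ∘ copy (tens X E) = id (tens X E).
Proof.
  assert (Hmarg1 : (marg1 X E ⊗ marg2 X E) ∘ alpha_inv X E (tens X E)
                   = id X ⊗ (lambda E ∘ (del E ⊗ marg2 X E))).
  { assert (Hsplit : marg1 X E ⊗ marg2 X E
                     = (rho X ⊗ id E) ∘ ((id X ⊗ del E) ⊗ marg2 X E)).
    { unfold marg1. rewrite <- tensm_comp, comp_id_l. reflexivity. }
    rewrite Hsplit, <- comp_assoc, <- alpha_inv_nat.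
    rewrite comp_assoc, triangle_inv, <- tensm_comp_r. reflexivity. }
  assert (Hmarg2 : lambda E ∘ (del E ⊗ marg2 X E) ∘ alpha E X E ∘ (sigma X E ⊗ id E)
                     ∘ alpha_inv X E E
                   = lambda E ∘ (del X ⊗ (lambda E ∘ (del E ⊗ id E)))).
  { assert (Hsplit : del E ⊗ marg2 X E
                     = (id unit ⊗ lambda E) ∘ (del E ⊗ (del X ⊗ id E))).
    { unfold marg2. rewrite <- tensm_comp, comp_id_l. reflexivity. }
    rewrite Hsplit, <- !comp_assoc.
    rewrite (precomp_eq2 _ _ _ _ _ (eq_sym (alpha_nat (del E) (del X) (id E)))).
    rewrite (precomp_eq _ _ _ _ (eq_sym (tensm_comp_l _ _))).
    rewrite <- (sigma_nat (del X) (del E)), sigma_unit, comp_id_l.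
    rewrite <- (alpha_inv_nat (del X) (del E) (id E)).
    rewrite (precomp_eq _ _ _ _ (alpha_iso2 _ _ _)), comp_id_l, <- tensm_comp, comp_id_l.
    reflexivity. }
  assert (Hcounit : (id X ⊗ (lambda E ∘ (del X ⊗ (lambda E ∘ (del E ⊗ id E)))))
                      ∘ alpha X X (tens E E) ∘ (copy X ⊗ copy E) = id (tens X E)).
  { rewrite tensm_comp_r, <- comp_assoc.
    rewrite (precomp_eq2 _ _ _ _ _ (eq_sym (alpha_nat (id X) (del X) _))).
    rewrite (precomp_eq _ _ _ _ (triangle _ _)), <- !tensm_comp, comp_id_l, <- !comp_assoc.
    rewrite copy_counit_r, copy_counit_l, tensm_id. reflexivity. }
  rewrite copy_tens, (precomp_eq _ _ _ _ Hmarg1), comp_assoc, <- tensm_comp_r.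
  rewrite <- !comp_assoc, Hmarg2. exact Hcounit.
Qed.

Lemma tensm_id_through_copy {A X E Y : Obj C} (pi : Hom A (tens X E)) (h : Hom X Y) :
  (h ⊗ id E) ∘ pi =
  ((marg2 X Y ⊗ marg2 X E) ∘ sigma (tens X E) (tens X Y))
  ∘ ((id (tens X E) ⊗ ((id X ⊗ h) ∘ (copy X ∘ marg1 X E))) ∘ (copy (tens X E) ∘ pi)).
Proof.
  rewrite <- comp_assoc, (precomp_eq2 _ _ _ _ _ (sigma_nat (id _) _)).
  rewrite (precomp_eq _ _ _ _ (copy_comm _)).
  rewrite (precomp_eq _ _ _ _ (eq_sym (tensm_comp _ _ _ _))), comp_id_r.
  rewrite (precomp_eq3 _ _ _ _ _ (marg2_graph h)).
  rewrite <- (comp_id_l (marg2 X E)), tensm_comp, <- comp_assoc.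
  rewrite (precomp_eq _ _ _ _ (marg_copy X E)), comp_id_l. reflexivity.
Qed.

Definition joint_dilation {A W X : Obj C} (f : Hom A W) (g : Hom W X)
  : Hom A (tens X (tens X W)) :=
  alpha X X W ∘ ((copy X ⊗ id W) ∘ ((g ⊗ id W) ∘ (copy W ∘ f))).

Lemma joint_dilation_is_dilation {A W X : Obj C} (f : Hom A W) (g : Hom W X) :
  is_dilation (g ∘ f) (joint_dilation f g).
Proof.
  unfold is_dilation, joint_dilation.
  rewrite <- (del_unique (del W ∘ (lambda W ∘ (del X ⊗ id W)))).
  rewrite !tensm_comp_r, <- !comp_assoc.
  rewrite (precomp_eq2 _ _ _ _ _ (eq_sym (alpha_nat (id X) (del X) (id W)))).
  rewrite (precomp_eq _ _ _ _ (triangle _ _)).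
  assert (Hcounit : (rho X ⊗ id W) ∘ (((id X ⊗ del X) ⊗ id W) ∘ (copy X ⊗ id W))
                    = id (tens X W)).
  { rewrite <- !tensm_comp_l, copy_counit_r, tensm_id. reflexivity. }
  rewrite (precomp_eq3 _ _ _ _ _ Hcounit), comp_id_l.
  rewrite (precomp_eq2 _ _ _ _ _ (eq_sym (tensm_interchange g (del W)))).
  rewrite (precomp_eq _ _ _ _ (rho_nat g)), <- comp_assoc, copy_counit_r_comp.
  reflexivity.
Qed.

Lemma causal_side_joint_dilation {A W X Y : Obj C}
  (f : Hom A W) (g : Hom W X) (h : Hom X Y) :
  (id W ⊗ ((id X ⊗ h) ∘ (copy X ∘ g))) ∘ (copy W ∘ f)
  = (sigma (tens X Y) W ∘ ((sigma Y X ⊗ id W) ∘ alpha_inv Y X W))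
    ∘ ((h ⊗ id (tens X W)) ∘ joint_dilation f g).
Proof.
  unfold joint_dilation.
  rewrite <- tensm_id, (precomp_eq2 _ _ _ _ _ (eq_sym (alpha_nat h (id X) (id W)))).
  rewrite <- !comp_assoc, (precomp_eq _ _ _ _ (alpha_iso1 _ _ _)), comp_id_l.
  rewrite !(comp_assoc (copy W ∘ f)), <- !tensm_comp_l.
  assert (Hswap : (id X ⊗ h) ∘ (copy X ∘ g) = sigma Y X ∘ ((h ⊗ id X) ∘ (copy X ∘ g))).
  { rewrite (precomp_eq2 _ _ _ _ _ (sigma_nat h (id X))), (precomp_eq _ _ _ _ (copy_comm X)).
    reflexivity. }
  rewrite Hswap, <- comp_assoc, (precomp_eq2 _ _ _ _ _ (sigma_nat _ (id W))).
  rewrite (precomp_eq _ _ _ _ (copy_comm W)). reflexivity.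
Qed.

Lemma dil_eq_as_eq {A X Y : Obj C} (p : Hom A X) (f g : Hom X Y) :
  dil_eq p f g -> as_eq p f g.
Proof.
  intros Hdil. unfold as_eq.
  rewrite <- (copy_comm X), <- !comp_assoc.
  rewrite !(precomp_eq2 _ _ _ _ _ (eq_sym (sigma_nat _ (id X)))).
  rewrite (Hdil X (copy X ∘ p) (copy_is_dilation p)). reflexivity.
Qed.

Lemma as_eq_dil_eq_causal :
  (forall (A X Y : Obj C) (p : Hom A X) (f g : Hom X Y), as_eq p f g -> dil_eq p f g) ->
  causal C.
Proof.
  intros Has_dil A W X Y f g h1 h2 Has.
  rewrite !causal_side_joint_dilation.
  rewrite (Has_dil A X Y (g ∘ f) h1 h2 Has _ _ (joint_dilation_is_dilation f g)).
  reflexivity.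
Qed.

Lemma causal_as_eq_dil_eq {A X Y : Obj C} (p : Hom A X) (f g : Hom X Y) :
  causal C -> as_eq p f g -> dil_eq p f g.
Proof.
  intros Hcausal Has E pi Hpi. apply is_dilationE in Hpi.
  assert (Hgraph := Hcausal A (tens X E) X Y pi (marg1 X E) f g).
  rewrite Hpi in Hgraph.
  rewrite (tensm_id_through_copy pi f), (tensm_id_through_copy pi g), (Hgraph Has).
  reflexivity.
Qed.

End MarkovCategory.

Theorem proposition4p3 (C : MarkovCat) :
  (forall (A X Y : Obj C) (p : Hom A X) (f g : Hom X Y),
      dil_eq p f g -> as_eq p f g)
  /\
  ((forall (A X Y : Obj C) (p : Hom A X) (f g : Hom X Y),
      as_eq p f g -> dil_eq p f g) <-> causal C).
Proof.
  split; [| split].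
  - intros A X Y p f g. apply dil_eq_as_eq.
  - apply as_eq_dil_eq_causal.
  - intros Hcausal A X Y p f g. apply causal_as_eq_dil_eq, Hcausal.
Qed.
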